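(* Let $\partial$ be a quasi-elementary $M_{A,B}$-differential with associated sets $P\subset B$, $X\subset A\setminus B$ and set $H(\partial)$ of $\partial$-boundary homologically essential elements. If $p\in H(\partial)$ appears (with nonzero coefficient) in $\partial(x)$ for some $x\in X$, then $x$ and $p$ form a $\partial'$-pair, where $\partial'$ is $\partial$ regarded as an $M_{A'}$-differential.
   Context: $\mathbb E$ a field; $A$ a finite linearly ordered graded set, $\mathbb E(A)$ the graded vector space with basis $A$; an $M$-differential is a degree $-1$ map with $\partial^2=0$ sending each basis element into the span of strictly smaller basis elements. For $B\subset A$ with $\partial\mathbb E(B)\subset\mathbb E(B)$, $\partial$ is an $M_{A,B}$-differential; $\partial_B$ is its restriction and $\partial_{A\setminus B}$ the induced differential on $\mathbb E(A)/\mathbb E(B)\cong\mathbb E(A\setminus B)$. An $M$-differential is elementary if every basis element maps to $0$ or to a single basis element and no two basis elements map to the same one. For $\partial$ with $\partial_B,\partial_{A\setminus B}$ elementary: $Q=\{b\in B:\partial_Bb\ne0\}$, $R=\partial_B(Q)$, $P=B\setminus(Q\cup R)$, $Y=\{a\in A\setminus B:\partial_{A\setminus B}a\ne0\}$, $Z=\partial_{A\setminus B}(Y)$, $X=(A\setminus B)\setminus(Y\cup Z)$. $\partial$ is quasi-elementary if $\partial_B,\partial_{A\setminus B}$ are elementary, each $\partial(x)$, $x\in X$, contains at most one element of $P$ and with coefficient $1$, and each element of $P$ appears in at most one $\partial(x)$, $x\in X$. $H(\partial)$: writing $B=\{b_1\prec\dots\prec b_K\}$, $I_k=\iota_*H_*(\mathbb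 E(\{b_1,\dots,b_k\}),\partial_B)\cap\partial_*H_*(\mathbb E(A),\mathbb E(B),\partial)$ ($\iota_*$ from inclusion into $\mathbb E(B)$, $\partial_*$ the connecting map), $I_0=0$, and $b_k\in H(\partial)$ iff $I_k\ne I_{k-1}$. If $B=\{b_1\prec\dots\prec b_K\}$ and $A\setminus B=\{a_1\prec\dots\prec a_L\}$, $A'$ denotes the graded set $A$ with the new order $b_1\prec\dots\prec b_K\prec a_1\prec\dots\prec a_L$; an $M_{A,B}$-differential is also an $M$-differential for $A'$. For an $M$-differential $\delta$ on a linearly ordered graded basis, there is a unique elementary $M$-differential $\delta_1$ obtained from $\delta$ by conjugation with a graded automorphism preserving every initial span $\mathrm{span}\{a_1,\dots,a_i\}$ (Barannikov); $u,v$ form a $\delta$-pair if $\delta_1(u)=v$. *)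

From HB Require Import structures.
From mathcomp Require Import all_boot all_order all_algebra.
Set Implicit Arguments. Unset Strict Implicit. Unset Printing Implicit Defensive.
Import Order.TTheory GRing.Theory Num.Theory.
Local Open Scope ring_scope.

(* The finite linearly ordered graded set A is 'I_n, with
   a_0 < a_1 < ... < a_{n-1} (order of the index) and grading deg.
   E(A) = 'rV[F]_n (row vectors, coordinates in the basis A).
   A linear map d on E(A) is a matrix D with  d(v) = v *m D ;
   D i j = coefficient of a_j in d(a_i). *)

Section Defs.
Variables (F : fieldType) (n : nat).
Implicit Types (D G : 'M[F]_n) (B S : {set 'I_n}) (deg : 'I_n -> int).

Definition ltA : rel 'I_n := fun i j => (i < j)%N.

Definition M_diff (lt : rel 'I_n) deg D : Prop :=
  [/\ (forall i j, D i j != 0 -> deg j = deg i - 1),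
      D *m D = 0
    & (forall i j, D i j != 0 -> lt j i)].

Definition M_AB_diff deg D B : Prop :=
  M_diff ltA deg D /\ (forall i j, i \in B -> D i j != 0 -> j \in B).

(* The differential induced by D on E(S) (S = B: restriction d_B;
   S = A\B: induced differential on E(A)/E(B) ~ E(A\B)) has matrix the
   S x S block of D.  "elementary" for that induced differential: *)
Definition elementary_on S D : Prop :=
  (forall i, i \in S ->
     (forall j, j \in S -> D i j = 0) \/
     exists2 j, j \in S & D i j = 1 /\ (forall k, k \in S -> k != j -> D i k = 0))
  /\ (forall i i' j, i \in S -> i' \in S -> j \in S ->
        D i j != 0 -> D i' j != 0 -> i = i').

Definition Qset S D : {set 'I_n} := [set b in S | [exists j in S, D b j != 0]].
Definition Rset S D : {set 'I_n} := [set j in S | [exists b in S, D b j != 0]].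
Definition Pset S D : {set 'I_n} := S :\: (Qset S D :|: Rset S D).
Definition Xset B D : {set 'I_n} := Pset (~: B) D.

Definition quasi_elementary D B : Prop :=
  [/\ elementary_on B D, elementary_on (~: B) D,
      (forall x p, x \in Xset B D -> p \in Pset B D -> D x p != 0 ->
          D x p = 1 /\ (forall p', p' \in Pset B D -> D x p' != 0 -> p' = p))
    & (forall p x x', p \in Pset B D -> x \in Xset B D -> x' \in Xset B D ->
          D x p != 0 -> D x' p != 0 -> x = x')].

Definition supported (v : 'rV[F]_n) S : Prop := forall j, j \notin S -> v 0 j = 0.

(* A subspace of H(E(B)) is
   encoded by its preimage in the cycle space.  For S a prefix of B,
   I_sub D B S v  <->  v is a cycle of E(B) whose class lies in
     iota_* H(E(S), d_B)  /\  im (connecting map H(E(A),E(B)) -> H(E(B))). *)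
Definition I_sub D B S (v : 'rV[F]_n) : Prop :=
  (exists z u : 'rV[F]_n, [/\ supported z S, z *m D = 0, supported u B
                            & v = z + u *m D])
  /\ (exists c : 'rV[F]_n, supported (c *m D) B /\ v = c *m D).

Definition essential D B (p : 'I_n) : Prop :=
  p \in B /\
  ~ (forall v, I_sub D B [set b in B | (b <= p)%N] v <->
               I_sub D B [set b in B | (b < p)%N] v).

Definition ltA' B : rel 'I_n := fun i j =>
  ((i \in B) && (j \notin B)) || (((i \in B) == (j \in B)) && (i < j)%N).

(* u, v form a delta-pair (w.r.t. the order lt): delta_1(u) = v, where
   delta_1 = g^-1 delta g is the (unique, Barannikov) elementary
   M-differential conjugate to delta by a graded automorphism g preserving
   every initial span. *)
Definition is_pair (lt : rel 'I_n) deg D (u v : 'I_n) : Prop :=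
  exists G, [/\ G \in unitmx,
     (forall i j, G i j != 0 -> deg i = deg j),
     (forall i j, G i j != 0 -> j = i \/ lt j i),
     M_diff lt deg (G *m D *m invmx G)
   & elementary_on setT (G *m D *m invmx G)
     /\ (forall k, (G *m D *m invmx G) u k = (k == v)%:R)].

End Defs.

(* Split E(A) = E(B) + E(A\B) and write D = Db + Dc + Dm, with Db, Dc the diagonal
   blocks (elementary) and Dm the block from A\B to B.  For an elementary block M the
   transpose is a partial inverse: M M^T and M^T M are the coordinate projections onto
   Q and R.  Conjugating by 1 + N, where the shear N = Dc^T Dm - pi_X Dm Db^T maps A\B
   into B (so it is triangular for the order of A', degree-preserving and N^2 = 0),
   removes from Dm everything except its X x P entries; besides Dm Db = - Dc Dm this
   uses pi_X Dm pi_Q = 0, i.e. that d x is a d_B-cycle for x in X.  Quasi-elementarity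
   makes the conjugate elementary, and it maps x to p once p is in P.  An essential p
   with D x p <> 0 lies in P: not in Q since d x is a cycle, and not in R since if
   p = d q, dropping p from a cycle does not change its class in I_k, so
   I_k = I_(k-1). *)

From HB Require Import structures.
From mathcomp Require Import all_boot all_order all_algebra.
Import GRing.Theory.
Local Open Scope ring_scope.
Set Implicit Arguments. Unset Strict Implicit. Unset Printing Implicit Defensive.

HB.lock Definition proj_on (R : pzRingType) n (S : {set 'I_n}) : 'M[R]_n :=
  diag_mx (\row_i (i \in S)%:R).

HB.lock Definition subblock (R : pzRingType) n (S T : {set 'I_n}) (A : 'M[R]_n) :=
  proj_on R S *m A *m proj_on R T.

Section Projections.
Variables (R : pzRingType) (n : nat).
Implicit Types (S T U : {set 'I_n}) (A : 'M[R]_n).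
Local Notation proj_on := (proj_on R).

Lemma proj_onE S i j : proj_on S i j = ((i == j) && (i \in S))%:R.
Proof. by rewrite unlock !mxE; case: (i \in S); case: (i == j); rewrite ?mulr0n. Qed.

Lemma proj_on_mulmxE S A i j : (proj_on S *m A) i j = (i \in S)%:R * A i j.
Proof. by rewrite unlock mul_diag_mx !mxE. Qed.

Lemma mulmx_proj_onE S A i j : (A *m proj_on S) i j = A i j * (j \in S)%:R.
Proof. by rewrite unlock mul_mx_diag !mxE. Qed.

Lemma subblockE S T A i j :
  subblock S T A i j = ((i \in S) && (j \in T))%:R * A i j.
Proof.
rewrite subblock.unlock mulmx_proj_onE proj_on_mulmxE.
by case: (i \in S); case: (j \in T); rewrite ?mul0r ?mul1r ?mulr0 ?mulr1.
Qed.

Lemma proj_onM S T : proj_on S *m proj_on T = proj_on (S :&: T).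
Proof.
apply/matrixP => i j; rewrite proj_on_mulmxE !proj_onE inE.
by case: (i \in S); case: (i \in T); rewrite ?andbF ?mul0r ?mul1r.
Qed.

Lemma proj_on0 : proj_on (set0 : {set 'I_n}) = 0.
Proof. by apply/matrixP => i j; rewrite proj_onE mxE inE andbF. Qed.

Lemma proj_onT : proj_on [set: 'I_n] = 1%:M.
Proof. by apply/matrixP => i j; rewrite proj_onE mxE inE andbT. Qed.

Lemma proj_onU S T : [disjoint S & T] ->
  proj_on (S :|: T) = proj_on S + proj_on T.
Proof.
move/disjoint_setI0/setP => ST0; apply/matrixP => i j; rewrite mxE !proj_onE.
have := ST0 i; rewrite !inE.
by case: (i == j); case: (i \in S); case: (i \in T); rewrite //= ?addr0 ?add0r.
Qed.

Lemma proj_onDC S : proj_on S + proj_on (~: S) = 1%:M.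
Proof. by rewrite -proj_onU ?setUCr ?proj_onT // -setI_eq0 setICr. Qed.

Lemma proj_on_subblock U S T A :
  proj_on U *m subblock S T A = subblock (U :&: S) T A.
Proof. by rewrite !subblock.unlock !mulmxA proj_onM. Qed.

Lemma subblock_proj_on S T U A :
  subblock S T A *m proj_on U = subblock S (T :&: U) A.
Proof. by rewrite !subblock.unlock -mulmxA proj_onM. Qed.

Lemma subblock0l T A : subblock set0 T A = 0.
Proof. by rewrite !subblock.unlock proj_on0 !mul0mx. Qed.

Lemma subblock0r S A : subblock S set0 A = 0.
Proof. by rewrite !subblock.unlock proj_on0 mulmx0. Qed.

Lemma subblock0 S T : subblock S T (0 : 'M[R]_n) = 0.
Proof. by rewrite !subblock.unlock mulmx0 mul0mx. Qed.

Lemma subblock_mulmx S T U A A' :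
  subblock S U (A *m A') =
  subblock S T A *m subblock T U A' + subblock S (~: T) A *m subblock (~: T) U A'.
Proof.
rewrite !subblock.unlock -{1}(mulmx1 A) -(proj_onDC T) mulmxDr !mulmxDl !mulmxDr !mulmxA.
rewrite -!(mulmxA _ (proj_on T) (proj_on T)).
by rewrite -!(mulmxA _ (proj_on (~: T)) (proj_on (~: T))) !proj_onM !setIid mulmxDl.
Qed.

End Projections.

Lemma tr_proj_on (R : pzRingType) n (S : {set 'I_n}) :
  (proj_on R S)^T = proj_on R S.
Proof. by rewrite unlock tr_diag_mx. Qed.

Lemma tr_subblock (R : comPzRingType) n (S T : {set 'I_n}) (A : 'M[R]_n) :
  (subblock S T A)^T = subblock T S A^T.
Proof. by rewrite !subblock.unlock !trmx_mul !tr_proj_on mulmxA. Qed.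

Section Graded.
Variables (R : pzRingType) (n : nat) (deg : 'I_n -> int).
Implicit Types (A : 'M[R]_n).

Definition graded (s : int) A := forall i j, A i j != 0 -> deg j = deg i + s.

Lemma graded_add s A (A' : 'M[R]_n) : graded s A -> graded s A' -> graded s (A + A').
Proof.
move=> gA gA' i j; rewrite mxE => nz.
have [A0|/gA//] := eqVneq (A i j) 0.
by apply: gA'; rewrite A0 add0r in nz.
Qed.

Lemma graded_opp s A : graded s A -> graded s (- A).
Proof. by move=> gA i j; rewrite mxE oppr_eq0; apply: gA. Qed.

Lemma graded_mul s t A (A' : 'M[R]_n) :
  graded s A -> graded t A' -> graded (s + t) (A *m A').
Proof.
move=> gA gA' i j; rewrite mxE => nz.
have /existsP [k /andP [nzA nzA']] : [exists k, (A i k != 0) && (A' k j != 0)].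
  apply: contraNT nz; rewrite negb_exists => /forallP none.
  rewrite big1 // => k _; move: (none k); rewrite negb_and !negbK.
  by case/orP => /eqP ->; rewrite ?mul0r ?mulr0.
by rewrite (gA' _ _ nzA') (gA _ _ nzA) addrA.
Qed.

Lemma graded_tr s A : graded s A -> graded (- s) A^T.
Proof. by move=> gA i j; rewrite mxE => /gA ->; rewrite addrK. Qed.

Lemma graded_subblock s S T A : graded s A -> graded s (subblock S T A).
Proof.
move=> gA i j; rewrite subblockE => nz; apply: gA.
by apply: contraNneq nz => ->; rewrite mulr0.
Qed.

Lemma graded1 : graded 0 (1%:M : 'M[R]_n).
Proof.
move=> i j; rewrite mxE; have [->|_] := eqVneq i j; first by rewrite addr0.
by rewrite mulr0n eqxx.
Qed.

End Graded.

Section Elementary.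
Variables (F : fieldType) (n : nat) (D : 'M[F]_n) (S : {set 'I_n}).
Local Notation M := (subblock S S D).
Local Notation Q := (Qset S D).
Local Notation R := (Rset S D).

Lemma mem_Qset i j : i \in S -> j \in S -> D i j != 0 -> i \in Q.
Proof. by move=> iS jS nz; rewrite inE iS; apply/existsP; exists j; rewrite jS. Qed.

Lemma mem_Rset i j : i \in S -> j \in S -> D i j != 0 -> j \in R.
Proof. by move=> iS jS nz; rewrite inE jS; apply/existsP; exists i; rewrite iS. Qed.

Lemma Qset_sub : Q \subset S.
Proof. by apply/subsetP => i; rewrite inE => /andP []. Qed.

Lemma Rset_sub : R \subset S.
Proof. by apply/subsetP => i; rewrite inE => /andP []. Qed.

Lemma mem_Pset i : (i \in Pset S D) = [&& i \in S, i \notin Q & i \notin R].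
Proof. by rewrite !inE negb_or andbC. Qed.

Lemma Pset_sub : Pset S D \subset S.
Proof. by apply/subsetP => i; rewrite mem_Pset => /andP []. Qed.

Lemma Pset_Qset0 : Pset S D :&: Q = set0.
Proof.
by apply/setP => i; rewrite inE mem_Pset in_set0; case: (i \in Q); rewrite !andbF.
Qed.

Lemma Rset_Pset0 : R :&: Pset S D = set0.
Proof.
by apply/setP => i; rewrite inE mem_Pset in_set0; case: (i \in R); rewrite ?andbF.
Qed.

Lemma subblock_Qset : subblock Q S D = M.
Proof.
apply/matrixP => i j; rewrite !subblockE.
have [->|nz] := eqVneq (D i j) 0; first by rewrite !mulr0.
have [iS|iS] := boolP (i \in S); last by rewrite (contraNF (subsetP Qset_sub i) iS).
have [jS|] := boolP (j \in S); last by rewrite !andbF.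
by rewrite (mem_Qset iS jS nz).
Qed.

Lemma subblock_Rset : subblock S R D = M.
Proof.
apply/matrixP => i j; rewrite !subblockE.
have [->|nz] := eqVneq (D i j) 0; first by rewrite !mulr0.
have [jS|jS] := boolP (j \in S).
  by have [iS|] := boolP (i \in S); rewrite // (mem_Rset iS jS nz).
by rewrite (contraNF (subsetP Rset_sub j) jS) !andbF.
Qed.

Hypothesis elS : elementary_on S D.

Lemma elementary_on_row i j : i \in S -> j \in S -> D i j != 0 ->
  D i j = 1 /\ (forall k, k \in S -> D i k != 0 -> k = j).
Proof.
case: elS => rows _ iS jS nz; case: (rows i iS) => [row0|[j' j'S [one others]]].
  by rewrite row0 ?eqxx in nz.
have jj' : j = j' by apply: contraNeq nz => ne; rewrite others.
split=> [|k kS]; first by rewrite jj'.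
by rewrite jj'; apply: contraNeq => ne; rewrite others ?eqxx.
Qed.

Lemma elementary_on_col i i' j : i \in S -> i' \in S -> j \in S ->
  D i j != 0 -> D i' j != 0 -> i = i'.
Proof. by case: elS => _; apply. Qed.

Lemma subblock_unit_entry i j : i \in S -> j \in S -> D i j != 0 ->
  (forall k, M i k = (k == j)%:R) /\ (forall k, M k j = (k == i)%:R).
Proof.
move=> iS jS nz; have [one uniq] := elementary_on_row iS jS nz.
split=> k; rewrite subblockE.
  have [->|ne] := eqVneq k j; first by rewrite iS jS one mulr1.
  case kS: (k \in S); last by rewrite andbF mul0r.
  by rewrite iS mul1r; apply/eqP; apply: contraNT ne => /(uniq _ kS) ->.
have [->|ne] := eqVneq k i; first by rewrite iS jS one mulr1.
case kS: (k \in S); last by rewrite mul0r.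
by rewrite jS mul1r; apply/eqP; apply: contraNT ne => /(elementary_on_col iS kS jS nz) ->.
Qed.

Lemma subblock_mul_tr : M *m M^T = proj_on F Q.
Proof.
apply/matrixP => i i'; rewrite [LHS]mxE proj_onE.
under eq_bigr => j _ do rewrite [M^T _ _]mxE.
case Qi: (i \in Q); last first.
  rewrite big1 ?andbF // => j _.
  by rewrite -subblock_Qset subblockE Qi !mul0r.
move: Qi; rewrite inE => /andP [iS /existsP [j /andP [jS nz]]].
have [rowi colj] := subblock_unit_entry iS jS nz.
rewrite (bigD1 j) //= big1 => [|k kj]; last by rewrite rowi (negbTE kj) mul0r.
by rewrite rowi eqxx mul1r addr0 colj eq_sym andbT.
Qed.

Lemma subblock_tr_mul : M^T *m M = proj_on F R.
Proof.
apply/matrixP => j j'; rewrite [LHS]mxE proj_onE.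
under eq_bigr => i _ do rewrite [M^T _ _]mxE.
case Rj: (j \in R); last first.
  rewrite big1 ?andbF // => i _.
  by rewrite -subblock_Rset subblockE Rj andbF !mul0r.
move: Rj; rewrite inE => /andP [jS /existsP [i /andP [iS nz]]].
have [rowi colj] := subblock_unit_entry iS jS nz.
rewrite (bigD1 i) //= big1 => [|k ki]; last by rewrite colj (negbTE ki) mul0r.
by rewrite colj eqxx mul1r addr0 rowi eq_sym andbT.
Qed.

Hypothesis M_sq0 : M *m M = 0.

Lemma Qset_Rset_disjoint : [disjoint Q & R].
Proof.
have QR0 : proj_on F (Q :&: R) = 0.
  rewrite -proj_onM -subblock_mul_tr -subblock_tr_mul mulmxA -(mulmxA M).
  by rewrite -trmx_mul M_sq0 trmx0 mulmx0 mul0mx.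
rewrite -setI_eq0; apply/eqP/setP => i; rewrite in_set0.
have := congr1 (fun A : 'M_n => A i i) QR0; rewrite proj_onE eqxx mxE.
by case: (i \in _) => // /eqP; rewrite oner_eq0.
Qed.

Lemma proj_on_split :
  proj_on F S = proj_on F Q + proj_on F R + proj_on F (Pset S D).
Proof.
apply/matrixP => i j; rewrite !mxE !proj_onE mem_Pset.
have /implyP := subsetP Qset_sub i; have /implyP := subsetP Rset_sub i.
have /disjoint_setI0/setP/(_ i) := Qset_Rset_disjoint; rewrite in_setI in_set0.
case: (i == j); case: (i \in Q); case: (i \in R); case: (i \in S) => //= *.
all: by rewrite ?addr0 ?add0r.
Qed.

End Elementary.

Lemma elementary_onT (F : fieldType) n (M : 'M[F]_n) :
  (forall i j, M i j != 0 -> M i j = 1) ->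
  (forall i j j', M i j != 0 -> M i j' != 0 -> j = j') ->
  (forall i i' j, M i j != 0 -> M i' j != 0 -> i = i') ->
  elementary_on setT M.
Proof.
move=> one row_uniq col_uniq; split=> [i _|i i' j _ _ _]; last exact: col_uniq.
have [j nz|row0] := pickP (fun j => M i j != 0); last first.
  by left=> j _; apply/eqP; rewrite -[_ == _]negbK row0.
right; exists j; rewrite ?inE //; split=> [|k _ kj]; first exact: one.
by apply/eqP; apply: contraNT kj => /(row_uniq _ _ _ nz) ->.
Qed.

Section ImageFiltration.
Variables (F : fieldType) (n : nat) (D : 'M[F]_n) (B : {set 'I_n}).
Implicit Types (S : {set 'I_n}) (v : 'rV[F]_n).

Lemma I_sub_mono S (S' : {set 'I_n}) v : S \subset S' -> I_sub D B S v -> I_sub D B S' v.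
Proof.
move=> sub [[z [u [zS zc uB ve]]] im]; split=> //; exists z, u; split=> // j jS'.
by apply: zS; apply: contra (subsetP sub j) jS'.
Qed.

(* if p = d q in E(B), the p-coordinate of a cycle can be traded for a boundary *)
Lemma I_sub_drop_boundary S p q v : D *m D = 0 -> q \in B ->
  delta_mx 0 q *m D = delta_mx 0 p :> 'rV_n ->
  I_sub D B (p |: S) v -> I_sub D B S v.
Proof.
move=> D_sq0 qB dq [[z [u [zS zc uB ->]]] im]; split=> //.
exists (z - z 0 p *: delta_mx 0 p), (u + z 0 p *: delta_mx 0 q); split.
- move=> j jS; rewrite !mxE /=; have [->|jp] := eqVneq j p.
    by rewrite mulr1 subrr.
  by rewrite mulr0 subr0 zS // !inE negb_or jp.
- by rewrite mulmxBl -scalemxAl -dq -mulmxA D_sq0 mulmx0 scaler0 zc subr0.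
- move=> j jB; rewrite !mxE uB // add0r.
  by rewrite (_ : j == q = false) ?mulr0 //; apply: contraNF jB => /eqP ->.
- by rewrite mulmxDl -scalemxAl dq addrACA addNr addr0.
Qed.

End ImageFiltration.

Section QuasiElementary.
Variables (F : fieldType) (n : nat) (D : 'M[F]_n) (B : {set 'I_n}).
Hypotheses (D_sq0 : D *m D = 0)
  (B_closed : forall i j, i \in B -> D i j != 0 -> j \in B)
  (elB : elementary_on B D) (elC : elementary_on (~: B) D).

Local Notation C := (~: B).
Local Notation pj := (proj_on F).
Local Notation Db := (subblock B B D).
Local Notation Dc := (subblock C C D).
Local Notation Dm := (subblock C B D).
Local Notation Q := (Qset B D).
Local Notation R := (Rset B D).
Local Notation P := (Pset B D).
Local Notation Y := (Qset C D).
Local Notation Z := (Rset C D).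
Local Notation X := (Xset B D).

Lemma subblock_BC : subblock B C D = 0.
Proof.
apply/matrixP => i j; rewrite subblockE mxE inE.
case iB: (i \in B); case jB: (j \in B); rewrite /= ?mul0r // mul1r.
by apply/eqP; apply: contraFT jB => /(B_closed iB).
Qed.

Lemma D_split : D = Db + Dc + Dm.
Proof.
apply/matrixP => i j; rewrite !mxE !subblockE !inE.
case iB: (i \in B); case jB: (j \in B); rewrite /= ?mul0r ?mul1r ?addr0 ?add0r //.
by apply/eqP; apply: contraFT jB => /(B_closed iB).
Qed.

Lemma Db_sq0 : Db *m Db = 0.
Proof.
have := subblock_mulmx B B B D D; rewrite D_sq0 subblock0 subblock_BC mul0mx addr0.
by move<-.
Qed.

Lemma Dc_sq0 : Dc *m Dc = 0.
Proof.
have := subblock_mulmx C B C D D; rewrite D_sq0 subblock0 subblock_BC mulmx0 add0r.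
by move<-.
Qed.

Lemma Dm_mul_Db : Dm *m Db = - (Dc *m Dm).
Proof.
have := subblock_mulmx C B B D D; rewrite D_sq0 subblock0.
by move/eqP; rewrite eq_sym addr_eq0 => /eqP.
Qed.

Lemma X_sub : X \subset C.
Proof. exact: Pset_sub. Qed.

Lemma setI_BX0 : B :&: X = set0.
Proof. by rewrite -(setIidPr X_sub) setIA setICr set0I. Qed.

Lemma pX_Dm : pj X *m Dm = subblock X B D.
Proof. by rewrite proj_on_subblock (setIidPl X_sub). Qed.

Lemma pX_Dc : pj X *m Dc = 0.
Proof. by rewrite -(subblock_Qset D C) proj_on_subblock Pset_Qset0 subblock0l. Qed.

Lemma Dc_pX : Dc *m pj X = 0.
Proof. by rewrite -(subblock_Rset D C) subblock_proj_on Rset_Pset0 subblock0r. Qed.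

Lemma subblock_XQ : subblock X Q D = 0.
Proof.
rewrite -(setIidPr (Qset_sub D B)) -subblock_proj_on -(subblock_mul_tr elB) -pX_Dm.
by rewrite -!mulmxA (mulmxA Dm) Dm_mul_Db mulNmx mulmxN !mulmxA pX_Dc !mul0mx oppr0.
Qed.

Lemma row_boundary q p : q \in B -> D q p != 0 ->
  delta_mx 0 q *m D = delta_mx 0 p :> 'rV_n.
Proof.
move=> qB nz; have [one uniq] := elementary_on_row elB qB (B_closed qB nz) nz.
apply/matrixP => a k; rewrite -rowE !mxE [a]ord1 /=.
have [->|kp] := eqVneq k p; first exact: one.
by apply/eqP; apply: contraNT kp => nzk; rewrite (uniq _ (B_closed qB nzk) nzk).
Qed.

Lemma essential_Pset x p : x \in X -> D x p != 0 -> essential D B p -> p \in P.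
Proof.
move=> xX nz [pB not_jump]; rewrite mem_Pset pB /=; apply/andP; split.
  apply/negP => pQ; have := congr1 (fun A : 'M_n => A x p) subblock_XQ.
  by rewrite subblockE xX pQ mul1r [(0 : 'M_n) _ _]mxE; apply/eqP.
apply/negP; rewrite inE pB => /existsP [q /andP [qB nzq]]; apply: not_jump => v.
have -> : [set b in B | (b <= p)%N] = p |: [set b in B | (b < p)%N].
  apply/setP => b; rewrite !inE leq_eqVlt val_eqE.
  by have [->|] := eqVneq b p; rewrite ?pB.
split; first exact: I_sub_drop_boundary D_sq0 qB (row_boundary qB nzq).
by apply: I_sub_mono; apply: subsetUr.
Qed.

Definition shear := Dc^T *m Dm - subblock X B D *m Db^T.

Definition reduced := Db + Dc + subblock X P D.

Lemma pC_Dc : pj C *m Dc = Dc.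
Proof. by rewrite proj_on_subblock setIid. Qed.

Lemma pC_Dm : pj C *m Dm = Dm.
Proof. by rewrite proj_on_subblock setIid. Qed.

Lemma projB_shear : pj B *m shear = 0.
Proof.
rewrite mulmxBr !mulmxA tr_subblock !proj_on_subblock setICr setI_BX0.
by rewrite !subblock0l !mul0mx subrr.
Qed.

Lemma shear_projC : shear *m pj C = 0.
Proof.
rewrite mulmxBl -!mulmxA !tr_subblock !subblock_proj_on setICr.
by rewrite !subblock0r !mulmx0 subrr.
Qed.

Lemma shear_sq0 : shear *m shear = 0.
Proof.
have shear_pB : shear *m pj B = shear.
  by rewrite -[RHS]mulmx1 -(proj_onDC F B) mulmxDr shear_projC addr0.
by rewrite -{1}shear_pB -mulmxA projB_shear mulmx0.
Qed.

Lemma shear_mulD : shear *m D = - (subblock Z B D + subblock X R D).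
Proof.
rewrite {1}D_split !mulmxDr -pC_Dc -pC_Dm !mulmxA shear_projC !mul0mx !addr0.
rewrite mulmxBl -!mulmxA Dm_mul_Db (subblock_tr_mul elB) mulmxN mulmxA.
rewrite (subblock_tr_mul elC) proj_on_subblock subblock_proj_on.
by rewrite (setIidPl (Rset_sub D C)) (setIidPr (Rset_sub D B)) opprD.
Qed.

Lemma reduced_mul_shear : reduced *m shear = subblock Y B D.
Proof.
have Db_pB : Db *m pj B = Db by rewrite subblock_proj_on setIid.
have XP_pB : subblock X P D *m pj B = subblock X P D.
  by rewrite subblock_proj_on (setIidPl (Pset_sub D B)).
rewrite !mulmxDl -Db_pB -XP_pB -!mulmxA projB_shear !mulmx0 add0r addr0.
rewrite mulmxBr !mulmxA (subblock_mul_tr elC) -pX_Dm mulmxA Dc_pX !mul0mx subr0.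
by rewrite proj_on_subblock (setIidPl (Qset_sub D C)).
Qed.

Lemma Dm_split :
  Dm = subblock X P D + subblock Y B D + (subblock Z B D + subblock X R D).
Proof.
have XB_pB : subblock X B D = subblock X B D *m pj B.
  by rewrite subblock_proj_on setIid.
rewrite -{1}pC_Dm (proj_on_split elC Dc_sq0) !mulmxDl !proj_on_subblock.
rewrite (setIidPl (Qset_sub D C)) (setIidPl (Rset_sub D C)) (setIidPl X_sub).
rewrite XB_pB (proj_on_split elB Db_sq0) !mulmxDr !subblock_proj_on.
rewrite (setIidPr (Qset_sub D B)) (setIidPr (Rset_sub D B)) (setIidPr (Pset_sub D B)).
rewrite subblock_XQ add0r [_ + subblock X P D]addrC addrACA.
by rewrite [subblock Y B D + _]addrC.
Qed.

Lemma conj_shear : (1%:M + shear) *m D = reduced *m (1%:M + shear).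
Proof.
rewrite mulmxDl mul1mx shear_mulD mulmxDr mulmx1 reduced_mul_shear.
by rewrite {1}D_split Dm_split /reduced addrA addrK addrA.
Qed.

Lemma mul_shear_inv : (1%:M + shear) *m (1%:M - shear) = 1%:M.
Proof. by rewrite mulmxDl mul1mx mulmxBr mulmx1 shear_sq0 subr0 subrK. Qed.

Lemma unitmx_shear : 1%:M + shear \in unitmx.
Proof. by case: (mulmx1_unit mul_shear_inv). Qed.

Lemma invmx_shear : invmx (1%:M + shear) = 1%:M - shear.
Proof. by rewrite -[RHS](mulKmx unitmx_shear) mul_shear_inv mulmx1. Qed.

Lemma conj_shear_reduced : (1%:M + shear) *m D *m invmx (1%:M + shear) = reduced.
Proof. by rewrite invmx_shear conj_shear -mulmxA mul_shear_inv mulmx1. Qed.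

Lemma reduced_sq0 : reduced *m reduced = 0.
Proof.
rewrite -conj_shear_reduced -!mulmxA mulKmx ?unitmx_shear //.
by rewrite (mulmxA D) D_sq0 mul0mx mulmx0.
Qed.

Lemma shear_support i j : shear i j != 0 -> i \notin B /\ j \in B.
Proof.
move=> nz; split; apply: contraNT nz => h; apply/eqP.
  have := congr1 (fun A : 'M_n => A i j) projB_shear.
  by rewrite proj_on_mulmxE [(0 : 'M_n) _ _]mxE (negbNE h) mul1r.
have := congr1 (fun A : 'M_n => A i j) shear_projC.
by rewrite mulmx_proj_onE [(0 : 'M_n) _ _]mxE inE h mulr1.
Qed.

Lemma reducedE i j : reduced i j =
  [|| (i \in B) && (j \in B), (i \in C) && (j \in C) | (i \in X) && (j \in P)]%:R
  * D i j.
Proof.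
have /implyP XnB : i \in X -> i \notin B by move/(subsetP X_sub); rewrite inE.
have /implyP PB : j \in P -> j \in B by move/(subsetP (Pset_sub D B)).
rewrite !mxE !subblockE !in_setC -!mulrDl; congr (_ * _); move: XnB PB.
case: (i \in X); case: (j \in P); case: (i \in B); case: (j \in B) => //= *.
all: by rewrite ?addr0 ?add0r.
Qed.

Lemma reduced_neq0 i j : reduced i j != 0 ->
  [/\ reduced i j = D i j, D i j != 0 &
      [|| (i \in B) && (j \in B), (i \in C) && (j \in C) | (i \in X) && (j \in P)]].
Proof. by rewrite reducedE; case: [|| _, _ | _]; rewrite ?mul1r ?mul0r ?eqxx. Qed.

Lemma X_row_C x j : x \in X -> j \in C -> D x j = 0.
Proof.
move=> xX jC; have xC := subsetP X_sub x xX.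
by apply/eqP; apply: contraTT xX => nz; rewrite mem_Pset (mem_Qset xC jC nz) andbF.
Qed.

Lemma P_col_B i p : p \in P -> i \in B -> D i p = 0.
Proof.
move=> pP iB; apply/eqP; apply: contraTT pP => nz.
by rewrite mem_Pset (mem_Rset iB (B_closed iB nz) nz) !andbF.
Qed.

Hypothesis X_row_P : forall x p, x \in X -> p \in P -> D x p != 0 ->
  D x p = 1 /\ (forall p', p' \in P -> D x p' != 0 -> p' = p).
Hypothesis P_col_X : forall p x x', p \in P -> x \in X -> x' \in X ->
  D x p != 0 -> D x' p != 0 -> x = x'.

Lemma reduced_one i j : reduced i j != 0 -> reduced i j = 1.
Proof.
case/reduced_neq0 => -> nz /or3P [/andP [iB jB]|/andP [iC jC]|/andP [iX jP]].
- by case: (elementary_on_row elB iB jB nz).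
- by case: (elementary_on_row elC iC jC nz).
- by case: (X_row_P iX jP nz).
Qed.

Lemma reduced_row_uniq i j j' : reduced i j != 0 -> reduced i j' != 0 -> j = j'.
Proof.
case/reduced_neq0 => _ nz cl /reduced_neq0 [_ nz' cl'].
have [iB|iB] := boolP (i \in B).
  have [_ uniq] := elementary_on_row elB iB (B_closed iB nz) nz.
  exact/esym/(uniq _ (B_closed iB nz') nz').
have iC : i \in C by rewrite inE.
rewrite (negbTE iB) iC /= in cl cl'.
have [iX|niX] := boolP (i \in X); last first.
  rewrite (negbTE niX) !orbF in cl cl'.
  have [_ uniq] := elementary_on_row elC iC cl nz.
  exact/esym/(uniq _ cl' nz').
rewrite iX /= in cl cl'.
have inP k : D i k != 0 -> (k \in C) || (k \in P) -> k \in P.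
  by move=> nzk /orP [kC|//]; rewrite (X_row_C iX kC) eqxx in nzk.
have [_ uniq] := X_row_P iX (inP _ nz cl) nz.
exact/esym/(uniq _ (inP _ nz' cl') nz').
Qed.

Lemma reduced_col_uniq i i' j : reduced i j != 0 -> reduced i' j != 0 -> i = i'.
Proof.
case/reduced_neq0 => _ nz cl /reduced_neq0 [_ nz' cl'].
have [jB|jB] := boolP (j \in B); last first.
  have jC : j \in C by rewrite inE.
  have jnP : j \notin P by apply: contra jB; apply: (subsetP (Pset_sub D B)).
  move: cl cl'; rewrite (negbTE jB) (negbTE jnP) jC !andbF !andbT !orbF /= => cl cl'.
  exact: (elementary_on_col elC cl cl' jC nz nz').
have jnC : (j \in C) = false by rewrite inE jB.
move: cl cl'; rewrite jB jnC !andbT !andbF /=.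
have [jP|jnP] := boolP (j \in P); last first.
  rewrite !andbF !orbF => cl cl'.
  exact: (elementary_on_col elB cl cl' jB nz nz').
rewrite !andbT => cl cl'.
have inX k : D k j != 0 -> (k \in B) || (k \in X) -> k \in X.
  by move=> nzk /orP [kB|//]; rewrite (P_col_B jP kB) eqxx in nzk.
exact: P_col_X jP (inX _ nz cl) (inX _ nz' cl') nz nz'.
Qed.

Lemma reduced_elementary : elementary_on setT reduced.
Proof. exact: elementary_onT reduced_one reduced_row_uniq reduced_col_uniq. Qed.

Variable deg : 'I_n -> int.
Hypothesis D_graded : graded deg (-1) D.
Hypothesis D_lower : forall i j, D i j != 0 -> ltA j i.

Lemma graded_shear : graded deg 0 shear.
Proof.
apply: graded_add; last apply: graded_opp.
  have gDc := graded_tr (graded_subblock (S := C) (T := C) D_graded).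
  have := graded_mul gDc (graded_subblock (S := C) (T := B) D_graded).
  by rewrite opprK addrN.
have gDb := graded_tr (graded_subblock (S := B) (T := B) D_graded).
by have := graded_mul (graded_subblock (S := X) (T := B) D_graded) gDb; rewrite addrN.
Qed.

Lemma graded_reduced : graded deg (-1) reduced.
Proof. by do 2 ?apply: graded_add; apply: graded_subblock. Qed.

Lemma reduced_lower i j : reduced i j != 0 -> ltA' B j i.
Proof.
rewrite /ltA'; case/reduced_neq0 => _ /D_lower lt_ji.
case/or3P => [/andP [-> ->]|/andP []|/andP [iX jP]]; rewrite ?lt_ji ?orbT //.
  by rewrite !inE => /negbTE -> /negbTE ->.
by have := subsetP X_sub i iX; rewrite inE (subsetP (Pset_sub D B) j jP) => /negbTE ->.
Qed.

Lemma is_pair_X_P x p : x \in X -> p \in P -> D x p != 0 ->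
  is_pair (ltA' B) deg D x p.
Proof.
move=> xX pP nz; exists (1%:M + shear); rewrite conj_shear_reduced; split.
- exact: unitmx_shear.
- by move=> i j /(graded_add (@graded1 F n deg) graded_shear) ->; rewrite addr0.
- move=> i j; rewrite mxE [1%:M _ _]mxE; have [->|ij] := eqVneq i j; first by left.
  by rewrite add0r => /shear_support [iB jB]; right; rewrite /ltA' jB iB.
- by split; [exact: graded_reduced | exact: reduced_sq0 | exact: reduced_lower].
split; first exact: reduced_elementary.
have nzE : reduced x p != 0 by rewrite reducedE xX pP !orbT mul1r.
move=> k; have [->|kp] := eqVneq k p; first by rewrite (reduced_one nzE).
by apply/eqP; apply: contraNT kp => nzk; apply/eqP; apply: reduced_row_uniq nzk nzE.
Qed.

End QuasiElementary.

Theorem lemma3p6 (F : fieldType) (n : nat) (deg : 'I_n -> int)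
    (D : 'M[F]_n) (B : {set 'I_n}) (x p : 'I_n) :
  M_AB_diff deg D B ->
  quasi_elementary D B ->
  essential D B p ->
  x \in Xset B D ->
  D x p != 0 ->
  is_pair (ltA' B) deg D x p.
Proof.
move=> [[D_graded D_sq0 D_lower] B_closed] [elB elC X_row_P P_col_X] ess xX nz.
have pP := essential_Pset D_sq0 B_closed elB xX nz ess.
exact: (is_pair_X_P D_sq0 B_closed elB elC X_row_P P_col_X D_graded D_lower xX pP nz).
Qed.
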